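(* Let $v\in\Sigma^*$, let $u$ be a $v$-minimal word, $i\in\mathrm{supp}(u)$, and $r_i=\mathrm{Rnk}(\mathcal{I}_i)$. Then $|\mathcal{I}_i/\!\sim_i|\le D(2,r_i,n)+1$. In particular, for any $g\in\mathcal{I}_i$ there is a word $z$ with $|z|\le D(2,r_i,n)$ such that $g\theta_i(z)\sim_i 0_i$.
   Context: Let $\mathcal{A}=\langle Q,\Sigma,\delta\rangle$ be a synchronizing automaton with $n=|Q|$ states $q_1,\dots,q_n$; write $q\cdot u$ for the action of $u\in\Sigma^*$ (extended to subsets) and $\mathrm{rk}(u)=|Q\cdot u|$. Each word acts linearly on $\mathbb{C}Q$ by $q\mapsto q\cdot u$, preserving $w^\perp=\{x:\langle x,q_1+\dots+q_n\rangle=0\}$; let $\rho:\Sigma^*\to\mathbb{M}_{n-1}(\mathbb{C})$ be the induced representation and $\mathcal{R}$ the $\mathbb{C}$-algebra generated by $\rho(\Sigma^* )$. Write $\mathcal{R}/\mathrm{Rad}(\mathcal{R})\cong\prod_{i=1}^k\mathbb{M}_{n_i}(\mathbb{C})$ (Jacobson radical, Wedderburn–Artin) and let $\theta_i:\Sigma^*\to\mathbb{M}_{n_i}(\mathbb{C})$ be $\rho$ followed by the quotient map and the $i$-th projection; $0_i$ is the zero matrix. The monoid $\theta_i(\Sigma^* )$ has a unique $0$-minimal ideal $\mathcal{I}_i$; $\mathrm{Rnk}(\mathcal{I}_i)=\min\{\mathrm{rk}(x): x\in\Sigma^*,\ \theta_i(x)\in\mathcal{I}_i\setminus\{0_i\}\}$.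 The support of a word $z$ is $\mathrm{supp}(z)=\{i:\theta_i(z)\neq0_i\}$. For $v\in\Sigma^*$, a word $u\in\Sigma^*v\Sigma^*$ is $v$-minimal if $\mathrm{supp}(u)\neq\emptyset$ and there is no $z\in\Sigma^*v\Sigma^*$ with $\emptyset\neq\mathrm{supp}(z)\subsetneq\mathrm{supp}(u)$. For such $u$, $i\in\mathrm{supp}(u)$ and $g\in\mathcal{I}_i$, a word $w$ $u$-represents $g$ if $w\in\Sigma^*u\Sigma^*$, $\theta_i(w)=g$, and either $g=0_i$ or $\mathrm{rk}(w)$ is minimum among all words $w'\in\Sigma^*u\Sigma^*$ with $\theta_i(w')=g$. Define $\sigma_i$ on $\mathcal{I}_i$ by $g\,\sigma_i\,f$ iff $g=f$ or there exist words $w_1,w_2$ that $u$-represent $g$ and $f$ respectively with $|Q\cdot w_1\cap Q\cdot w_2|>1$; let $\sim_i$ be the transitive closure of $\sigma_i$ (an equivalence relation on $\mathcal{I}_i$). $D(2,r,n)$ denotes the maximum size of a family of $r$-element subsets of $[1,n]$ in which every $2$-element subset is contained in at most one member. *)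

From Stdlib Require Import Relations.
From mathcomp Require Import all_boot all_algebra.
From mathcomp Require Import reals complex.

Set Implicit Arguments.
Unset Strict Implicit.
Unset Printing Implicit Defensive.
Import GRing.Theory.
Local Open Scope ring_scope.

(* ---------- Automata ----------
   The automaton has n = m.+1 states q_1..q_n, encoded as 'I_m.+1 (q_n is ord_max);
   the alphabet is a finite type S; words are seq S.                             *)
Section Automaton.
Variables (S : finType) (m : nat) (delta : 'I_m.+1 -> S -> 'I_m.+1).

Definition act (q : 'I_m.+1) (w : seq S) : 'I_m.+1 := foldl delta q w.
Definition img (w : seq S) : {set 'I_m.+1} := [set act q w | q : 'I_m.+1].
Definition rk (w : seq S) : nat := #|img w|.
Definition synchronizing : Prop := exists w : seq S, rk w = 1%N.

(* The representation rho on w^perp = {x | <x, q_1+...+q_n> = 0}, written in the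
   basis b_j = q_j - q_n (j < m = n-1), with row vectors (x |-> x . w is
   x |-> x *m rho w, so rho (w1 ++ w2) = rho w1 *m rho w2).                      *)
Definition rho (F : fieldType) (w : seq S) : 'M[F]_m :=
  \matrix_(j < m, l < m)
    ((act (widen_ord (leqnSn m) j) w == widen_ord (leqnSn m) l)%:R
     - (act ord_max w == widen_ord (leqnSn m) l)%:R).
End Automaton.

Section Algebra.
Variables (F : fieldType) (m : nat).

Definition gen_alg (X : 'M[F]_m -> Prop) : 'M[F]_m -> Prop :=
  fun A => forall Y : 'M[F]_m -> Prop,
    (forall B, X B -> Y B) -> Y 1%:M ->
    (forall B C, Y B -> Y C -> Y (B + C)) ->
    (forall (c : F) B, Y B -> Y (c *: B)) ->
    (forall B C, Y B -> Y C -> Y (B *m C)) -> Y A.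

Definition left_ideal (Ralg L : 'M[F]_m -> Prop) : Prop :=
  [/\ forall x, L x -> Ralg x, L 0,
      forall x y, L x -> L y -> L (x + y) &
      forall a x, Ralg a -> L x -> L (a *m x)].

Definition maximal_left_ideal (Ralg L : 'M[F]_m -> Prop) : Prop :=
  [/\ left_ideal Ralg L, exists x, Ralg x /\ ~ L x &
      forall L', left_ideal Ralg L' -> (forall x, L x -> L' x) ->
        (forall x, L' x -> L x) \/ (forall x, Ralg x -> L' x)].

Definition jacobson_rad (Ralg : 'M[F]_m -> Prop) : 'M[F]_m -> Prop :=
  fun x => Ralg x /\ forall L, maximal_left_ideal Ralg L -> L x.

(* phi = (phi_i)_{i<k} induces an isomorphism of algebras
   Ralg / Rad(Ralg) ~= prod_{i<k} M_{d i}(F)  (Wedderburn-Artin decomposition) *)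
Definition WA_decomp (Ralg : 'M[F]_m -> Prop) (k : nat) (d : 'I_k -> nat)
  (phi : forall i : 'I_k, 'M[F]_m -> 'M[F]_(d i)) : Prop :=
  (forall i, (0 < d i)%N) /\
  (forall i x y, Ralg x -> Ralg y -> phi i (x + y) = phi i x + phi i y) /\
  (forall i (c : F) x, Ralg x -> phi i (c *: x) = c *: phi i x) /\
  (forall i x y, Ralg x -> Ralg y -> phi i (x *m y) = phi i x *m phi i y) /\
  (forall i, phi i 1%:M = 1%:M) /\
  (forall g : forall i : 'I_k, 'M[F]_(d i),
        exists x, Ralg x /\ forall i, phi i x = g i) /\
  (forall x, Ralg x -> ((forall i, phi i x = 0) <-> jacobson_rad Ralg x)).
End Algebra.

Section MonoidIdeal.
Variables (F : fieldType) (d : nat).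

Definition mon_ideal (M J : 'M[F]_d -> Prop) : Prop :=
  [/\ forall x, J x -> M x, exists x, J x &
      forall a b x, M a -> M b -> J x -> J (a *m x *m b)].

Definition zero_minimal_ideal (M J : 'M[F]_d -> Prop) : Prop :=
  [/\ mon_ideal M J, exists x, J x /\ x != 0 &
      forall K, mon_ideal M K -> (forall x, K x -> J x) ->
        (forall x, K x -> x = 0) \/ (forall x, J x -> K x)].

Definition unique_zero_minimal_ideal (M J : 'M[F]_d -> Prop) : Prop :=
  zero_minimal_ideal M J /\
  forall J', zero_minimal_ideal M J' -> forall x, J' x <-> J x.
End MonoidIdeal.

Section Component.
Variables (S : finType) (m : nat) (delta : 'I_m.+1 -> S -> 'I_m.+1).
Variables (F : fieldType) (k : nat) (d : 'I_k -> nat)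
  (phi : forall i : 'I_k, 'M[F]_m -> 'M[F]_(d i)).

Definition theta (i : 'I_k) (w : seq S) : 'M[F]_(d i) := phi i (rho delta F w).

Definition theta_monoid (i : 'I_k) : 'M[F]_(d i) -> Prop :=
  fun g => exists w, theta i w = g.

Definition supp (w : seq S) : {set 'I_k} := [set i | theta i w != 0].

Definition is_Rnk (i : 'I_k) (I : 'M[F]_(d i) -> Prop) (r : nat) : Prop :=
  (exists x, [/\ I (theta i x), theta i x != 0 & rk delta x = r]) /\
  (forall x, I (theta i x) -> theta i x != 0 -> (r <= rk delta x)%N).

Definition v_minimal (v u : seq S) : Prop :=
  [/\ infix v u, supp u != set0 &
      ~ exists z, [/\ infix v z, supp z != set0 & supp z \proper supp u]].

Definition u_represents (u : seq S) (i : 'I_k) (g : 'M[F]_(d i)) (w : seq S) : Prop :=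
  [/\ infix u w, theta i w = g &
      g = 0 \/ forall w', infix u w' -> theta i w' = g -> (rk delta w <= rk delta w')%N].

Definition sigma_rel (u : seq S) (i : 'I_k) (I : 'M[F]_(d i) -> Prop)
  (g f : 'M[F]_(d i)) : Prop :=
  [/\ I g, I f &
      g = f \/ exists w1 w2, [/\ u_represents u g w1, u_represents u f w2 &
                               (1 < #|img delta w1 :&: img delta w2|)%N]].

Definition sim_rel (u : seq S) (i : 'I_k) (I : 'M[F]_(d i) -> Prop) :
  relation 'M[F]_(d i) := clos_trans _ (sigma_rel u I).
End Component.

Arguments theta_monoid [S m] delta [F k d] phi i _.
Arguments is_Rnk [S m] delta [F k d] phi i I r.
Arguments u_represents [S m] delta [F k d] phi u i g w.
Arguments sigma_rel [S m] delta [F k d] phi u i I g f.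
Arguments sim_rel [S m] delta [F k d] phi u i I _ _.

Definition D2 (r n : nat) : nat :=
  \max_(Fam : {set {set 'I_n}} |
          [forall A in Fam, #|A| == r] &&
          [forall x : 'I_n, forall y : 'I_n,
             (x != y) ==> (#|[set A in Fam | (x \in A) && (y \in A)]| <= 1)%N])
    #|Fam|.

(* Every nonzero g in I_i is theta_i of a word of Sigma^* u Sigma^* of rank
   r = Rnk(I_i): by 0-minimality, I_i is generated by theta_i(x p u) for a word
   x of rank r with theta_i(x) in I_i and a suitable p, and no nonzero element
   of I_i is theta_i of a word of smaller rank.  Hence every u-representative w
   of a nonzero g has |Q.w| = r, and right multiplication by theta_i(y) either
   kills g or keeps q |-> q.y injective on Q.w, so ~_i is a right congruence.
   Choosing one image Q.w per nonzero class, images of distinct classes share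
   at most one state, so they form a family counted by D(2, r, n); with the
   class of 0 this gives at most D(2, r, n) + 1 classes.  Finally, the |z| + 1
   prefixes of a shortest z with g theta_i(z) ~_i 0 (one exists, the automaton
   being synchronizing) lie in distinct classes, or the loop between two of
   them could be cut out. *)

From Stdlib Require Import Relations Classical ClassicalEpsilon.
From mathcomp Require Import all_boot all_algebra.
From mathcomp Require Import reals complex zify.

Set Implicit Arguments.
Unset Strict Implicit.
Unset Printing Implicit Defensive.
Import GRing.Theory.
Local Open Scope ring_scope.

Section PartialEquivalence.
Variables (T : eqType) (R : T -> T -> Prop).
Hypotheses (R_sym : forall x y, R x y -> R y x)
           (R_trans : forall x y z, R x y -> R y z -> R x z).

Lemma seq_transversal (s : seq T) : {in s, forall x, R x x} ->
  exists t : seq T, [/\ uniq t, {subset t <= s},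
    {in t &, forall x y, R x y -> x = y} &
    {in s, forall x, exists2 y, y \in t & R x y}].
Proof.
elim: s => [|x s IHs] Rrefl; first by exists [::]; split.
have [|t [t_uniq t_sub t_sep t_cov]] := IHs.
  by move=> y ys; apply: Rrefl; rewrite inE ys orbT.
have Rxx : R x x by apply: Rrefl; rewrite inE eqxx.
have sub_cons (t' : seq T) : {subset t' <= s} -> {subset t' <= x :: s}.
  by move=> t's y /t's ys; rewrite inE ys orbT.
have [[y yt Rxy] | no_rep] := classic (exists2 y, y \in t & R x y).
  exists t; split=> // [|z]; first exact: sub_cons.
  by rewrite inE => /predU1P[-> | /t_cov]; [exists y |].
have xNt : x \notin t by apply/negP => xt; apply: no_rep; exists x.
exists (x :: t); split=> [||a b|z].
- by rewrite /= xNt t_uniq.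
- by move=> z; rewrite inE => /predU1P[-> | /t_sub zs]; rewrite inE ?eqxx ?zs ?orbT.
- rewrite !inE => /predU1P[-> | a_t] /predU1P[-> | b_t] Rab //.
  + by case: no_rep; exists b.
  + by case: no_rep; exists a; last exact: R_sym.
  + exact: t_sep.
- rewrite inE => /predU1P[-> | /t_cov[y yt Rzy]]; first by exists x; rewrite ?inE ?eqxx.
  by exists y; rewrite // inE yt orbT.
Qed.

Lemma pigeonhole_rel (reps : seq T) (x : nat -> T) (n : nat) :
  (size reps < n)%N -> (forall t, (t < n)%N -> exists2 y, y \in reps & R (x t) y) ->
  exists s t, [/\ (s < t)%N, (t < n)%N & R (x s) (x t)].
Proof.
move=> small cov.
pose rep t := epsilon (inhabits (x t)) (fun y => y \in reps /\ R (x t) y).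
have repP t : (t < n)%N -> rep t \in reps /\ R (x t) (rep t).
  move=> tn; apply: (epsilon_spec (inhabits (x t)) (fun y => y \in reps /\ R (x t) y)).
  by have [y] := cov t tn; exists y.
apply: NNPP => no_pair.
have rep_inj : {in iota 0 n &, injective rep}.
  move=> s t; rewrite !mem_iota /= => sn tn rep_st.
  have Rst : R (x s) (x t).
    have [_ Rs] := repP s sn; have [_ Rt] := repP t tn.
    by apply: R_trans Rs _; rewrite rep_st; apply: R_sym.
  have [lt_st|lt_ts|] // := ltngtP s t; case: no_pair.
    by exists s, t.
  by exists t, s; split=> //; apply: R_sym.
have rep_uniq : uniq (map rep (iota 0 n)) by rewrite map_inj_in_uniq ?iota_uniq.
suff rep_sub : {subset map rep (iota 0 n) <= reps}.
  by have := uniq_leq_size rep_uniq rep_sub; rewrite size_map size_iota leqNgt small.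
by move=> y /mapP[t]; rewrite mem_iota => /andP[_ tn] ->; case: (repP t tn).
Qed.

End PartialEquivalence.

Section ClassCount.
Variables (T : eqType) (P : T -> Prop) (R : T -> T -> Prop) (o : T) (n r : nat)
  (lab : T -> {set 'I_n}).
Hypotheses (R_sym : forall x y, R x y -> R y x)
           (R_trans : forall x y z, R x y -> R y z -> R x z)
           (R_refl : forall x, P x -> R x x) (P_o : P o) (r_gt1 : (1 < r)%N)
           (lab_card : forall x, P x -> x != o -> #|lab x| = r)
           (lab_meet : forall x y, P x -> P y -> x != o -> y != o ->
              (1 < #|lab x :&: lab y|)%N -> R x y).

Lemma lab_inj_rel x y : P x -> P y -> x != o -> y != o -> lab x = lab y -> R x y.
Proof. by move=> Px Py xo yo lxy; apply: lab_meet; rewrite // -lxy setIid lab_card. Qed.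

Lemma finite_cover_by_labels : exists s : seq T,
  (forall x, x \in s -> P x) /\ (forall x, P x -> exists2 y, y \in s & R x y).
Proof.
pose labelled A x := [/\ P x, x != o & lab x = A].
pose pick_spec A x := P x /\ ((exists y, labelled A y) -> labelled A x).
pose pick A := epsilon (inhabits o) (pick_spec A).
have pickP A : pick_spec A (pick A).
  apply: (epsilon_spec (inhabits o) (pick_spec A)).
  have [[y [Py yo ly]] | none] := classic (exists y, labelled A y).
    by exists y; split=> // _; split.
  by exists o; split=> // /none.
exists (o :: map pick (enum {set 'I_n})); split.
  by move=> x; rewrite inE => /predU1P[-> | /mapP[A _ ->]] //; case: (pickP A).
move=> x Px; have [-> | xo] := eqVneq x o.
  by exists o; [rewrite inE eqxx | apply: R_refl].
have [Py yo ly] := (pickP (lab x)).2 (ex_intro _ x (And3 Px xo erefl)).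
exists (pick (lab x)); first by rewrite inE map_f ?mem_enum ?orbT.
exact: lab_inj_rel.
Qed.

Lemma separated_size_le_D2 (t : seq T) : uniq t -> (forall x, x \in t -> P x) ->
  {in t &, forall x y, R x y -> x = y} -> (size t <= D2 r n + 1)%N.
Proof.
move=> t_uniq t_P t_sep; pose nz := [seq x <- t | x != o].
have nzP x : x \in nz -> [/\ x \in t, P x & x != o].
  by rewrite mem_filter => /andP[xo xt]; split=> //; apply: t_P.
have size_t : (size t <= size nz + 1)%N.
  rewrite -(count_predC (fun x => x != o) t) size_filter leq_add2l.
  rewrite (eq_count (a2 := pred1 o)) ?count_uniq_mem ?leq_b1 // => x.
  by rewrite /= negbK.
have nz_sep x y : x \in nz -> y \in nz -> R x y -> x = y.
  by move=> /nzP[xt _ _] /nzP[yt _ _]; apply: t_sep.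
have lab_uniq : uniq (map lab nz).
  rewrite map_inj_in_uniq ?filter_uniq // => x y xnz ynz.
  have [[_ Px xo] [_ Py yo]] := (nzP x xnz, nzP y ynz).
  by move/(lab_inj_rel Px Py xo yo); apply: nz_sep.
pose Fam := [set:: map lab nz].
have card_Fam : #|Fam| = size nz by rewrite cardsE (card_uniqP lab_uniq) size_map.
apply: leq_trans size_t _; rewrite leq_add2r -card_Fam.
rewrite /D2; apply: (@leq_bigmax_cond _ _ (fun G : {set {set 'I_n}} => #|G|) Fam).
apply/andP; split.
  by apply/forall_inP => A; rewrite inE => /mapP[x /nzP[_ Px xo] ->]; rewrite lab_card.
apply/forallP => a; apply/forallP => b; apply/implyP => ab.
apply/card_le1_eqP => A B; rewrite !inE.
move=> /and3P[/mapP[x xnz ->] ax bx] /and3P[/mapP[y ynz ->] ay b_y].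
have [[_ Px xo] [_ Py yo]] := (nzP x xnz, nzP y ynz).
rewrite (nz_sep x y) //; apply: lab_meet => //.
apply: leq_trans (subset_leq_card (_ : [set a; b] \subset _)); first by rewrite cards2 ab.
by apply/subsetP => c; rewrite !inE => /orP[] /eqP ->; rewrite ?ax ?bx ?ay ?b_y.
Qed.

Lemma transversal_le_D2 : exists reps : seq T,
  [/\ (size reps <= D2 r n + 1)%N, forall x, x \in reps -> P x &
      forall x, P x -> exists2 y, y \in reps & R x y].
Proof.
have [s [s_P s_cov]] := finite_cover_by_labels.
have [t [t_uniq t_sub t_sep t_cov]] :=
  seq_transversal R_sym (fun x xs => R_refl (s_P x xs)).
have t_P x : x \in t -> P x by move/t_sub/s_P.
exists t; split=> [|//|x /s_cov[y ys Rxy]]; first exact: separated_size_le_D2.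
by have [z zt Ryz] := t_cov y ys; exists z => //; apply: R_trans Rxy Ryz.
Qed.

End ClassCount.

Section ShortestWord.
Variables (A : Type) (T : eqType) (P : T -> Prop) (R : T -> T -> Prop)
  (act : T -> seq A -> T).
Hypotheses (R_sym : forall x y, R x y -> R y x)
           (R_trans : forall x y z, R x y -> R y z -> R x z)
           (act_cat : forall x w1 w2, act x (w1 ++ w2) = act (act x w1) w2)
           (P_act : forall x w, P x -> P (act x w))
           (R_act : forall x y w, R x y -> R (act x w) (act y w)).

Lemma short_word_to_class (reps : seq T) (x o : T) (w : seq A) :
  (forall y, P y -> exists2 y', y' \in reps & R y y') -> P x -> R (act x w) o ->
  exists w', (size w' < size reps)%N /\ R (act x w') o.
Proof.
move=> cov Px; have [N] := ubnP (size w); elim: N w => // N IHN w wN Rwo.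
have [short | long] := ltnP (size w) (size reps); first by exists w.
pose prefix t := act x (take t w).
have [|t _|s [t [st tw Rst]]] := pigeonhole_rel R_sym R_trans (x := prefix)
  (n := (size w).+1) (reps := reps); [by rewrite ltnS | exact/cov/P_act |].
apply: (IHN (take s w ++ drop t w)).
  by rewrite size_cat size_take size_drop (leq_trans st tw); lia.
apply: (R_trans _ Rwo); rewrite act_cat -{3}(cat_take_drop t w) act_cat.
exact: R_act.
Qed.

End ShortestWord.

Lemma leq_card_setI_imset (aT rT : finType) (f : aT -> rT) (A B : {set aT}) :
  {in A &, injective f} -> (#|A :&: B| <= #|f @: A :&: f @: B|)%N.
Proof.
move=> f_inj; rewrite -(card_in_imset (f := f) (D := A :&: B)); last first.
  by move=> x y /setIP[xA _] /setIP[yA _]; apply: f_inj.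
by rewrite subset_leq_card // subsetI !imsetS ?subsetIl ?subsetIr.
Qed.

Section AutomatonAction.
Variables (S : finType) (m : nat) (delta : 'I_m.+1 -> S -> 'I_m.+1).

Lemma act_cat q w1 w2 : act delta q (w1 ++ w2) = act delta (act delta q w1) w2.
Proof. exact: foldl_cat. Qed.

Lemma img_cat w1 w2 :
  img delta (w1 ++ w2) = (fun q => act delta q w2) @: img delta w1.
Proof. by rewrite /img -imset_comp; apply: eq_imset => q /=; rewrite act_cat. Qed.

Lemma rk_catl w1 w2 : (rk delta (w1 ++ w2) <= rk delta w1)%N.
Proof. by rewrite /rk img_cat leq_imset_card. Qed.

Lemma rk_catr w1 w2 : (rk delta (w1 ++ w2) <= rk delta w2)%N.
Proof.
apply/subset_leq_card/subsetP => _ /imsetP[q _ ->].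
by rewrite act_cat imset_f.
Qed.

Lemma rk_gt0 w : (0 < rk delta w)%N.
Proof. by apply/card_gt0P; exists (act delta ord0 w); apply: imset_f. Qed.

Variable F : fieldType.

Lemma rho_nil : rho delta F [::] = 1%:M.
Proof.
apply/matrixP => a b; rewrite !mxE /act /=.
have /negbTE -> : ord_max != widen_ord (leqnSn m) b.
  by rewrite -val_eqE /= neq_ltn ltn_ord orbT.
by rewrite subr0 -val_eqE.
Qed.

Lemma rho_rk1 w : rk delta w = 1%N -> rho delta F w = 0.
Proof.
move=> /eqP/cards1P[c img_c].
have act_c q : act delta q w = c by apply/set1P; rewrite -img_c imset_f.
by apply/matrixP => a b; rewrite !mxE !act_c subrr.
Qed.

Lemma sum_widen_indicator (f : 'I_m.+1 -> F) q : f ord_max = 0 ->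
  \sum_(l < m) (q == widen_ord (leqnSn m) l)%:R * f (widen_ord (leqnSn m) l) = f q.
Proof.
move=> f_max; have := @big_ord_recr F 0 +%R m (fun l : 'I_m.+1 => (q == l)%:R * f l).
rewrite /= f_max mulr0 addr0 => <-.
rewrite (bigD1 q) //= eqxx mul1r big1 ?addr0 // => l /negbTE.
by rewrite eq_sym => ->; rewrite mul0r.
Qed.

Lemma rho_cat w1 w2 : rho delta F (w1 ++ w2) = rho delta F w1 *m rho delta F w2.
Proof.
apply/matrixP => a b; rewrite !mxE.
pose f q : F := (act delta q w2 == widen_ord (leqnSn m) b)%:R
  - (act delta ord_max w2 == widen_ord (leqnSn m) b)%:R.
have f_max : f ord_max = 0 by rewrite /f subrr.
under eq_bigr => l _ do rewrite !mxE mulrBl.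
rewrite sumrB !(sum_widen_indicator _ f_max) /f !act_cat.
by rewrite opprB addrA subrK.
Qed.

End AutomatonAction.

Section GeneratedAlgebra.
Variables (F : fieldType) (m : nat) (X : 'M[F]_m -> Prop).

Lemma gen_alg_gen B : X B -> gen_alg X B.
Proof. by move=> XB Y XY *; apply: XY. Qed.

Lemma gen_alg1 : gen_alg X 1%:M.
Proof. by move=> Y _ Y1. Qed.

Lemma gen_algD B C : gen_alg X B -> gen_alg X C -> gen_alg X (B + C).
Proof.
move=> gB gC Y XY Y1 YD YZ YM.
exact: YD (gB Y XY Y1 YD YZ YM) (gC Y XY Y1 YD YZ YM).
Qed.

Lemma gen_algZ c B : gen_alg X B -> gen_alg X (c *: B).
Proof.
move=> gB Y XY Y1 YD YZ YM.
exact: YZ (gB Y XY Y1 YD YZ YM).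
Qed.

Lemma gen_algM B C : gen_alg X B -> gen_alg X C -> gen_alg X (B *m C).
Proof.
move=> gB gC Y XY Y1 YD YZ YM.
exact: YM (gB Y XY Y1 YD YZ YM) (gC Y XY Y1 YD YZ YM).
Qed.

Lemma gen_alg_ind (Q : 'M[F]_m -> Prop) :
  (forall B, X B -> Q B) -> Q 1%:M ->
  (forall B C, gen_alg X B -> gen_alg X C -> Q B -> Q C -> Q (B + C)) ->
  (forall c B, gen_alg X B -> Q B -> Q (c *: B)) ->
  (forall B C, gen_alg X B -> gen_alg X C -> Q B -> Q C -> Q (B *m C)) ->
  forall B, gen_alg X B -> Q B.
Proof.
move=> QX Q1 QD QZ QM B gB.
suff [] : gen_alg X B /\ Q B by [].
apply: (gB (fun C => gen_alg X C /\ Q C))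
  => [C XC | | C D [gC QC] [gD QD'] | c C [gC QC] | C D [gC QC] [gD QD']].
- by split; [apply: gen_alg_gen | apply: QX].
- by split; [apply: gen_alg1 |].
- by split; [apply: gen_algD | apply: QD].
- by split; [apply: gen_algZ | apply: QZ].
- by split; [apply: gen_algM | apply: QM].
Qed.

End GeneratedAlgebra.

Section MonoidIdeals.
Variables (F : fieldType) (d : nat) (M J : 'M[F]_d -> Prop).
Hypotheses (M1 : M 1%:M) (MM : forall a b, M a -> M b -> M (a *m b)).

Lemma zero_minimal_ideal_generated y g : zero_minimal_ideal M J ->
  J y -> y != 0 -> J g -> exists a b, [/\ M a, M b & g = a *m y *m b].
Proof.
move=> [[JM _ J_ideal] _ J_min] Jy y0 Jg.
pose K x := exists a b, [/\ M a, M b & x = a *m y *m b].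
have Ky : K y by exists 1%:M, 1%:M; rewrite mul1mx mulmx1.
have K_ideal : mon_ideal M K.
  split=> [x [a [b [Ma Mb ->]]] | | a' b' x Ma' Mb' [a [b [Ma Mb ->]]]].
  - by apply: MM => //; apply/MM/JM.
  - by exists y.
  - by exists (a' *m a), (b *m b'); split; [apply: MM | apply: MM | rewrite !mulmxA].
have KJ x : K x -> J x by move=> [a [b [Ma Mb ->]]]; apply: J_ideal.
have [K0 | JK] := J_min K K_ideal KJ; last exact: JK.
by case/eqP: y0; apply: K0.
Qed.

End MonoidIdeals.

Lemma delta_mx_sandwichE (R : pzRingType) n (A C : 'M[R]_n) a b s t :
  (A *m delta_mx a b *m C) s t = A s a * C b t.
Proof.
have -> : delta_mx a b = delta_mx a (0 : 'I_1) *m delta_mx 0 b :> 'M[R]_n.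
  by rewrite mul_delta_mx.
by rewrite mulmxA -colE -mulmxA -rowE !mxE big_ord1 !mxE.
Qed.

Section WedderburnArtin.
Variables (F : fieldType) (m k : nat) (d : 'I_k -> nat)
  (phi : forall i : 'I_k, 'M[F]_m -> 'M[F]_(d i)) (X : 'M[F]_m -> Prop).
Hypotheses (X1 : X 1%:M) (XM : forall B C, X B -> X C -> X (B *m C))
           (WA : WA_decomp (gen_alg X) phi).
Variable i : 'I_k.

Lemma phiD B C : gen_alg X B -> gen_alg X C -> phi i (B + C) = phi i B + phi i C.
Proof. by case: WA => _ [D _]; apply: D. Qed.

Lemma phiZ c B : gen_alg X B -> phi i (c *: B) = c *: phi i B.
Proof. by case: WA => _ [_ [Z _]]; apply: Z. Qed.

Lemma phiM B C : gen_alg X B -> gen_alg X C -> phi i (B *m C) = phi i B *m phi i C.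
Proof. by case: WA => _ [_ [_ [M _]]]; apply: M. Qed.

Lemma phi1 : phi i 1%:M = 1%:M.
Proof. by case: WA => _ [_ [_ [_ [one _]]]]; apply: one. Qed.

Lemma phi0 : phi i 0 = 0.
Proof. by rewrite -(scale0r 1%:M) phiZ ?gen_alg1 // scale0r. Qed.

Lemma phi_sandwich_eq0 (A C : 'M[F]_(d i)) :
  (forall B, X B -> A *m phi i B *m C = 0) ->
  forall B, gen_alg X B -> A *m phi i B *m C = 0.
Proof.
move=> AXC B gB; move: A C AXC; elim/gen_alg_ind: B / gB.
- by move=> B XB A C; apply.
- by move=> A C; apply.
- move=> B B' gB gB' IHB IHB' A C AXC.
  by rewrite phiD // mulmxDr mulmxDl IHB // IHB' // addr0.
- move=> c B gB IHB A C AXC.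
  by rewrite phiZ // -scalemxAr -scalemxAl IHB // scaler0.
move=> B B' gB gB' IHB IHB' A C AXC.
rewrite phiM // mulmxA -(mulmxA (A *m phi i B)).
apply: IHB => B1 XB1; rewrite mulmxA; apply: IHB' => B2 XB2.
rewrite -(mulmxA A) -phiM; first exact: AXC (XM XB1 XB2).
all: exact: gen_alg_gen.
Qed.

Lemma phi_sandwich_neq0 (A C : 'M[F]_(d i)) : A != 0 -> C != 0 ->
  exists2 B, X B & A *m phi i B *m C != 0.
Proof.
move=> /matrix0Pn[s [a Asa]] /matrix0Pn[b [t Cbt]].
apply: NNPP => no_B.
have AXC B : X B -> A *m phi i B *m C = 0.
  by move=> XB; have [//|nz] := eqVneq (A *m phi i B *m C) 0; case: no_B; exists B.
case: WA => _ [_ [_ [_ [_ [onto _]]]]].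
have [E [gE phiE]] :=
  onto (fun i' => \matrix_(x, y) ((x == a :> nat) && (y == b :> nat))%:R).
have Eab : phi i E = delta_mx a b by rewrite phiE; apply/matrixP => x y; rewrite !mxE.
move/matrixP/(_ s t): (phi_sandwich_eq0 AXC gE).
by rewrite Eab delta_mx_sandwichE mxE => /eqP; rewrite mulf_eq0 (negbTE Asa) (negbTE Cbt).
Qed.

End WedderburnArtin.

Section Component.
Variables (S : finType) (m : nat) (delta : 'I_m.+1 -> S -> 'I_m.+1) (F : fieldType)
  (k : nat) (d : 'I_k -> nat) (phi : forall i : 'I_k, 'M[F]_m -> 'M[F]_(d i))
  (u : seq S) (j : 'I_k) (I : 'M[F]_(d j) -> Prop) (r : nat).

Local Notation rhoX := (fun A => exists w, A = rho delta F w).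
Local Notation th := (theta delta phi j).
Local Notation rk := (rk delta).
Local Notation img := (img delta).
Local Notation urep := (u_represents delta phi u j).
Local Notation sigma := (sigma_rel delta phi u j I).
Local Notation sim := (sim_rel delta phi u j I).

Hypotheses (WA : WA_decomp (gen_alg rhoX) phi) (sync : synchronizing delta)
  (I_min : unique_zero_minimal_ideal (theta_monoid delta phi j) I)
  (u_supp : j \in supp delta phi u) (I_Rnk : is_Rnk delta phi j I r).

Lemma rhoX1 : rhoX 1%:M.
Proof. by exists [::]; rewrite rho_nil. Qed.

Lemma rhoXM B C : rhoX B -> rhoX C -> rhoX (B *m C).
Proof. by move=> [w1 ->] [w2 ->]; exists (w1 ++ w2); rewrite rho_cat. Qed.

Lemma theta_cat w1 w2 : th (w1 ++ w2) = th w1 *m th w2.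
Proof. by rewrite /theta rho_cat (phiM WA) //; apply: gen_alg_gen; eexists. Qed.

Lemma theta_nil : th [::] = 1%:M.
Proof. by rewrite /theta rho_nil (phi1 WA). Qed.

Lemma theta_rk1 w : rk w = 1%N -> th w = 0.
Proof. by move=> rk1; rewrite /theta rho_rk1 // (phi0 WA). Qed.

Lemma theta_monoid1 : theta_monoid delta phi j 1%:M.
Proof. by exists [::]; rewrite theta_nil. Qed.

Lemma theta_monoidM a b :
  theta_monoid delta phi j a -> theta_monoid delta phi j b ->
  theta_monoid delta phi j (a *m b).
Proof. by move=> [wa <-] [wb <-]; exists (wa ++ wb); rewrite theta_cat. Qed.

Lemma I_sandwich g a b : I g -> I (th a *m g *m th b).
Proof.
by case: I_min => [[[_ _ I_ideal] _ _] _] Ig; apply: I_ideal => //; eexists.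
Qed.

Lemma I_mulr g w : I g -> I (g *m th w).
Proof. by move/(I_sandwich [::] w); rewrite theta_nil mul1mx. Qed.

Lemma I0 : I 0.
Proof.
case: I_min => [[[_ [g Ig] _] _ _] _]; have [w rk1] := sync.
by have := I_sandwich w w Ig; rewrite theta_rk1 // !mul0mx.
Qed.

Lemma rk_ge_Rnk w : I (th w) -> th w != 0 -> (r <= rk w)%N.
Proof. by case: I_Rnk => _; apply. Qed.

Lemma Rnk_gt1 : (1 < r)%N.
Proof.
case: I_Rnk => [[x [_ x0 <-]] _].
by rewrite ltn_neqAle eq_sym rk_gt0 andbT; apply: contraNneq x0 => /theta_rk1 ->.
Qed.

Lemma ideal_word_rk_le g : I g -> g != 0 ->
  exists w, [/\ infix u w, th w = g & (rk w <= r)%N].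
Proof.
move=> Ig g0; case: I_Rnk => [[x [Ix x0 rk_x]] _].
have th_u : th u != 0 by move: u_supp; rewrite inE.
have [_ [p ->] xpu] := phi_sandwich_neq0 rhoX1 rhoXM WA x0 th_u.
pose Y := x ++ p ++ u.
have thY : th Y = th x *m th p *m th u by rewrite !theta_cat mulmxA.
have IY : I (th Y) by rewrite theta_cat; apply: I_mulr Ix.
have Y0 : th Y != 0 by rewrite thY.
have [_ [_ [[wa <-] [wb <-] ->]]] := zero_minimal_ideal_generated
  theta_monoid1 theta_monoidM I_min.1 IY Y0 Ig.
exists (wa ++ Y ++ wb); split; rewrite ?theta_cat ?mulmxA //.
  exact/infix_catl/infix_catr/infix_catl/suffix_infix.
by rewrite -rk_x (leq_trans (rk_catr _ _ _)) // (leq_trans (rk_catl _ _ _)) ?rk_catl.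
Qed.

Lemma u_represents_rk g w : I g -> g != 0 -> urep g w -> rk w = r.
Proof.
move=> Ig g0 [uw thw [g_0 | w_min]]; first by rewrite g_0 eqxx in g0.
have [w' [uw' thw' rk_w']] := ideal_word_rk_le Ig g0.
apply/eqP; rewrite eqn_leq (leq_trans (w_min w' uw' thw') rk_w').
by rewrite rk_ge_Rnk ?thw.
Qed.

Lemma u_represents_exists g : I g -> g != 0 -> exists w, urep g w.
Proof.
move=> Ig g0; have [w [uw thw rk_w]] := ideal_word_rk_le Ig g0.
exists w; split=> //; right => w' uw' thw'.
by apply: leq_trans rk_w _; rewrite rk_ge_Rnk ?thw'.
Qed.

Lemma u_represents_catr g w y : I g -> urep g w -> urep (g *m th y) (w ++ y).
Proof.
move=> Ig rep_w; case: (rep_w) => uw thw _.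
split; [exact: infix_catr | by rewrite theta_cat thw |].
have [-> | gy0] := eqVneq (g *m th y) 0; [by left | right].
have g0 : g != 0 by apply: contraNneq gy0 => ->; rewrite mul0mx.
move=> w' uw' thw'; apply: leq_trans (rk_catl _ w y) _.
by rewrite (u_represents_rk Ig g0 rep_w) rk_ge_Rnk ?thw' //; apply: I_mulr.
Qed.

Lemma act_img_inj g w y : I g -> urep g w -> g *m th y != 0 ->
  {in img w &, injective (fun q => act delta q y)}.
Proof.
move=> Ig rep_w gy0; case: (rep_w) => _ thw _.
have g0 : g != 0 by apply: contraNneq gy0 => ->; rewrite mul0mx.
apply/imset_injP; rewrite -img_cat; change (rk (w ++ y) == rk w).
rewrite eqn_leq rk_catl (u_represents_rk Ig g0 rep_w) rk_ge_Rnk ?theta_cat ?thw //.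
exact: I_mulr.
Qed.

Lemma sigma_sym g h : sigma g h -> sigma h g.
Proof.
case=> Ig Ih [-> | [w1 [w2 [rep1 rep2 meet]]]]; split=> //; first by left.
by right; exists w2, w1; rewrite setIC.
Qed.

Lemma sigma_mulr g h y : sigma g h -> sigma (g *m th y) (h *m th y).
Proof.
case=> Ig Ih [-> | [w1 [w2 [rep1 rep2 meet]]]]; split; try exact: I_mulr.
  by left.
have [-> | gh] := eqVneq (g *m th y) (h *m th y); [by left | right].
exists (w1 ++ y), (w2 ++ y); split; try exact: u_represents_catr.
rewrite !img_cat; apply: leq_trans meet _.
have [gy0 | gy0] := eqVneq (g *m th y) 0.
  have hy0 : h *m th y != 0 by rewrite -gy0 eq_sym.
  rewrite [img w1 :&: _]setIC [_ @: img w1 :&: _]setIC.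
  exact: leq_card_setI_imset (act_img_inj Ih rep2 hy0).
exact: leq_card_setI_imset (act_img_inj Ig rep1 gy0).
Qed.

Lemma sim_sym g h : sim g h -> sim h g.
Proof.
elim=> [x y /sigma_sym | x y z _ IHxy _ IHyz]; first exact: t_step.
exact: t_trans IHyz IHxy.
Qed.

Lemma sim_refl g : I g -> sim g g.
Proof. by move=> Ig; apply: t_step; split=> //; left. Qed.

Lemma sim_mulr g h y : sim g h -> sim (g *m th y) (h *m th y).
Proof.
elim=> [x z /(sigma_mulr y) | x y' z _ IHxy _ IHyz]; first exact: t_step.
exact: t_trans IHxy IHyz.
Qed.

(* Junk for g = 0, which has no representative of rank r. *)
Definition rep_img g : {set 'I_m.+1} :=
  epsilon (inhabits set0) (fun A => exists w, urep g w /\ img w = A).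

Lemma rep_imgP g : I g -> g != 0 -> exists w, urep g w /\ img w = rep_img g.
Proof.
move=> Ig g0.
apply: (epsilon_spec (inhabits set0) (fun A => exists w, urep g w /\ img w = A)).
by have [w rep_w] := u_represents_exists Ig g0; exists (img w), w.
Qed.

Lemma card_rep_img g : I g -> g != 0 -> #|rep_img g| = r.
Proof.
by move=> Ig g0; have [w [rep_w <-]] := rep_imgP Ig g0; apply: u_represents_rk rep_w.
Qed.

Lemma sim_rep_img g h : I g -> I h -> g != 0 -> h != 0 ->
  (1 < #|rep_img g :&: rep_img h|)%N -> sim g h.
Proof.
move=> Ig Ih g0 h0 meet; apply: t_step; split=> //; right.
have [[wg [rep_g img_g]] [wh [rep_h img_h]]] := (rep_imgP Ig g0, rep_imgP Ih h0).
by exists wg, wh; rewrite img_g img_h.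
Qed.

Lemma sim_transversal_le_D2 : exists reps : seq 'M[F]_(d j),
  [/\ (size reps <= D2 r m.+1 + 1)%N, forall g, g \in reps -> I g &
      forall g, I g -> exists2 g', g' \in reps & sim g g'].
Proof.
exact: (transversal_le_D2 sim_sym (@t_trans _ _) sim_refl I0 Rnk_gt1
  card_rep_img sim_rep_img).
Qed.

Lemma sim_zero_short_word g : I g ->
  exists z, (size z <= D2 r m.+1)%N /\ sim (g *m th z) 0.
Proof.
move=> Ig; have [reps [size_reps _ reps_cov]] := sim_transversal_le_D2.
have [w0 rk1] := sync.
have g_w0 : sim (g *m th w0) 0 by rewrite theta_rk1 // mulmx0; apply/sim_refl/I0.
have [|z [z_short sim_z]] := short_word_to_class (act := fun g w => g *m th w)
  sim_sym (@t_trans _ _) _ I_mulr sim_mulr reps_cov Ig g_w0.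
  by move=> x w1 w2; rewrite theta_cat mulmxA.
exists z; split=> //; move: (leq_trans z_short size_reps); lia.
Qed.

End Component.

Theorem mainTheorem10 (R : realType) (S : finType) (m : nat)
  (delta : 'I_m.+1 -> S -> 'I_m.+1)
  (k : nat) (d : 'I_k -> nat)
  (phi : forall j : 'I_k, 'M[R[i]]_m -> 'M[R[i]]_(d j))
  (v u : seq S) (j : 'I_k) (I : 'M[R[i]]_(d j) -> Prop) (r : nat) :
  synchronizing delta ->
  WA_decomp (gen_alg (fun A => exists w, A = rho delta (R[i]) w)) phi ->
  unique_zero_minimal_ideal (theta_monoid delta phi j) I ->
  v_minimal delta phi v u ->
  j \in supp delta phi u ->
  is_Rnk delta phi j I r ->
  (exists reps : seq 'M[R[i]]_(d j),
      [/\ (size reps <= D2 r m.+1 + 1)%N,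
          forall g, g \in reps -> I g &
          forall g, I g -> exists2 g', g' \in reps & sim_rel delta phi u j I g g'])
  /\
  (forall g, I g -> exists z : seq S,
      (size z <= D2 r m.+1)%N /\ sim_rel delta phi u j I (g *m theta delta phi j z) 0).
Proof.
move=> sync WA I_min _ u_supp I_Rnk; split.
  exact: sim_transversal_le_D2 WA sync I_min u_supp I_Rnk.
exact: sim_zero_short_word WA sync I_min u_supp I_Rnk.
Qed.
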